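(* For every regular language $L \subseteq \Sigma^*$ over a finite alphabet $\Sigma$, the 2-overlap catenation closure $2\mathbb{OC}^*(L)$ is regular.
   Context: The 2-overlap catenation of strings $x, y \in \Sigma^*$ is $x \,\overline{\odot}^2\, y = \{ uvw \mid x = uv,\ y = vw,\ u,w \in \Sigma^*,\ v \in \Sigma^*,\ |v| \geq 2 \}$, extended to languages by $L_1 \,\overline{\odot}^2\, L_2 = \bigcup_{x\in L_1, y \in L_2} x \,\overline{\odot}^2\, y$. $2\mathbb{OC}^{(0)}(L) = L$, $2\mathbb{OC}^{(i+1)}(L) = 2\mathbb{OC}^{(i)}(L) \,\overline{\odot}^2\, 2\mathbb{OC}^{(i)}(L)$, and $2\mathbb{OC}^*(L) = \bigcup_{i \geq 0} 2\mathbb{OC}^{(i)}(L)$. *)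

From mathcomp Require Import all_boot.
Set Implicit Arguments. Unset Strict Implicit. Unset Printing Implicit Defensive.

Definition lang (Sigma : finType) := seq Sigma -> Prop.

Record dfa (Sigma : finType) := DFA {
  dfa_state : finType;
  dfa_s : dfa_state;
  dfa_fin : {set dfa_state};
  dfa_trans : dfa_state -> Sigma -> dfa_state }.

Definition dfa_accept (Sigma : finType) (A : dfa Sigma) (w : seq Sigma) : bool :=
  foldl (@dfa_trans _ A) (@dfa_s _ A) w \in @dfa_fin _ A.

Definition regular (Sigma : finType) (L : lang Sigma) : Prop :=
  exists A : dfa Sigma, forall w, L w <-> dfa_accept A w.

Definition overlap2 (Sigma : finType) (L1 L2 : lang Sigma) : lang Sigma :=
  fun z => exists u v w : seq Sigma,
    [/\ L1 (u ++ v), L2 (v ++ w), 2 <= size v & z = u ++ v ++ w].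

Fixpoint OC2_iter (Sigma : finType) (L : lang Sigma) (i : nat) : lang Sigma :=
  match i with
  | 0 => L
  | i'.+1 => overlap2 (OC2_iter L i') (OC2_iter L i')
  end.

Definition OC2_star (Sigma : finType) (L : lang Sigma) : lang Sigma :=
  fun z => exists i, OC2_iter L i z.

From mathcomp Require Import all_boot.
Set Implicit Arguments. Unset Strict Implicit. Unset Printing Implicit Defensive.

(* The closure 2OC^*(L) coincides with its left-linear version S, the least
   language containing L with S (o)^2 L included in S: a nested overlap
   x (o)^2 y with x, y in S unfolds, by induction on y, into successive
   overlaps with single words of L.  Membership of z in S only depends on
   which prefixes of z lie in S and which suffixes of z lie in L, so a DFA
   reading z can decide it by tracking, besides the run of an automaton A
   for L, the sets of A-states reached from the starting points a of the
   suffixes of the current prefix p with a + 1 <= |p| and a + 2 <= |p|, and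
   from those starting points that lie at least two letters before the end
   of some proper prefix of p in S. *)

Lemma cat_eq_cat (T : Type) (a b c d : seq T) : a ++ b = c ++ d ->
  (exists t, c = a ++ t /\ b = t ++ d) \/ (exists t, a = c ++ t /\ d = t ++ b).
Proof.
elim: a c => [|x a IH] [|y c] /=.
- by move=> ->; left; exists [::].
- by move=> ->; left; exists (y :: c).
- by move=> <-; right; exists (x :: a).
- by case=> -> /IH [[t [-> ->]]|[t [-> ->]]]; [left|right]; exists t.
Qed.

Section LinearClosure.
Variables (Sigma : finType) (L : lang Sigma).

Inductive oc2_lin : lang Sigma :=
| oc2_lin_base z : L z -> oc2_lin z
| oc2_lin_step u v w :
    oc2_lin (u ++ v) -> L (v ++ w) -> 2 <= size v -> oc2_lin (u ++ v ++ w).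

Lemma oc2_lin_overlap2 u v w :
  oc2_lin (u ++ v) -> oc2_lin (v ++ w) -> 2 <= size v -> oc2_lin (u ++ v ++ w).
Proof.
move=> Suv Svw; move Ey: (v ++ w) Svw => y Sy.
elim: Sy u v w Suv Ey => [y' Ly | u' v' w' _ IH Ly Hv'] u v w Suv Ey Hv.
  by rewrite -Ey in Ly *; apply: oc2_lin_step.
rewrite catA in Ey; case: (cat_eq_cat Ey) => [[t [Ev' _]] | [t [Ev Ew']]].
- rewrite [u ++ _]catA; apply: oc2_lin_step Ly Hv'.
  by rewrite -catA; apply: IH Suv (esym Ev') Hv.
- rewrite Ev -!catA in Suv; rewrite Ew' in Ly *; rewrite [u ++ _]catA [v' ++ _]catA.
  apply: oc2_lin_step; rewrite -?catA //.
  by rewrite size_cat (leq_trans Hv') ?leq_addr.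
Qed.

Lemma OC2_iter_mono i j x :
  i <= j -> 2 <= size x -> OC2_iter L i x -> OC2_iter L j x.
Proof.
elim: j => [|j IH]; first by rewrite leqn0 => /eqP ->.
rewrite leq_eqVlt => /orP [/eqP -> //|] Hij Hx Lx.
by exists [::], x, [::]; rewrite cats0; split => //; apply: IH.
Qed.

Lemma OC2_iter_lin i z : OC2_iter L i z -> oc2_lin z.
Proof.
elim: i z => [|i IH] z /=; first exact: oc2_lin_base.
by case=> u [v [w [Huv Hvw Hv ->]]]; apply: oc2_lin_overlap2 (IH _ Huv) (IH _ Hvw) Hv.
Qed.

Lemma OC2_starE z : OC2_star L z <-> oc2_lin z.
Proof.
split; first by case=> i /OC2_iter_lin.
elim=> [y Ly | u v w _ [i Hi] Ly Hv]; first by exists 0.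
exists i.+1, u, v, w; split => //.
by apply: (OC2_iter_mono (leq0n i)) => //; rewrite size_cat (leq_trans Hv) ?leq_addr.
Qed.

Lemma oc2_linP z : oc2_lin z <-> L z \/
  exists k a, [/\ k < size z, oc2_lin (take k z), a + 2 <= k & L (drop a z)].
Proof.
split.
  elim=> [y Ly | u v w Suv IH Ly Hv]; first by left.
  case: w Ly => [|c w] Ly; first by rewrite cats0.
  right; exists (size (u ++ v)), (size u); split.
  - by rewrite catA !size_cat /= addnS ltnS leq_addr.
  - by rewrite catA take_size_cat.
  - by rewrite size_cat leq_add2l.
  - by rewrite drop_size_cat.
case=> [Lz | [k [a [Hk Sk Ha La]]]]; first exact: oc2_lin_base.
have Hak : a < k by apply: leq_trans Ha; rewrite addn2.
have size_take_k : size (take k z) = k by rewrite size_take Hk.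
have Ek : take a z ++ drop a (take k z) = take k z.
  by rewrite -{1}(take_takel z (ltnW Hak)) cat_take_drop.
have Ea : drop a (take k z) ++ drop k z = drop a z.
  by rewrite -{3}(cat_take_drop k z) drop_cat size_take_k Hak.
rewrite -(cat_take_drop k z) -Ek -catA; apply: oc2_lin_step.
- by rewrite Ek.
- by rewrite Ea.
- by rewrite size_drop size_take_k leq_subRL ?(ltnW Hak) // addnC.
Qed.

End LinearClosure.

Section OverlapAutomaton.
Variables (Sigma : finType) (A : dfa Sigma).

Definition run (q : dfa_state A) (w : seq Sigma) := foldl (@dfa_trans _ A) q w.

Definition suffix_run (p : seq Sigma) a := run (dfa_s A) (drop a p).

Lemma suffix_run_rcons p c a :
  a <= size p -> suffix_run (rcons p c) a = dfa_trans (suffix_run p a) c.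
Proof. by move=> Ha; rewrite /suffix_run drop_rcons // /run foldl_rcons. Qed.

Definition suffix_runs_spec m p (T : {set dfa_state A}) :=
  forall q, q \in T <-> exists2 a, a + m <= size p & q = suffix_run p a.

Lemma suffix_runs_setU1 p T :
  suffix_runs_spec 1 p T -> suffix_runs_spec 0 p (dfa_s A |: T).
Proof.
move=> HT q; split.
  case/setU1P => [-> | /HT [a Ha ->]].
    by exists (size p); rewrite ?addn0 // /suffix_run drop_size.
  by exists a; rewrite ?addn0 // (leq_trans (leq_addr 1 a)).
case=> a; rewrite addn0 leq_eqVlt => /orP [/eqP -> | Ha] ->; apply/setU1P.
  by left; rewrite /suffix_run drop_size.
by right; apply/HT; exists a; rewrite ?addn1.
Qed.

Lemma suffix_runs_rcons m p c T : suffix_runs_spec m p T ->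
  suffix_runs_spec m.+1 (rcons p c) [set dfa_trans q c | q in T].
Proof.
move=> HT q; rewrite size_rcons; split.
  case/imsetP => _ /HT [a Ha ->] ->.
  by exists a; rewrite ?addnS ?ltnS // suffix_run_rcons // (leq_trans _ Ha) ?leq_addr.
case=> a; rewrite addnS ltnS => Ha ->; rewrite suffix_run_rcons; last first.
  exact: leq_trans (leq_addr _ _) Ha.
by apply/imsetP; exists (suffix_run p a) => //; apply/HT; exists a.
Qed.

Definition oc2_state :=
  (dfa_state A * {set dfa_state A} * {set dfa_state A} * {set dfa_state A})%type.

Definition oc2_final (x : oc2_state) : bool :=
  let '(d, _, _, G) := x in (d \in dfa_fin A) || [exists q in G, q \in dfa_fin A].

Definition oc2_trans (x : oc2_state) (c : Sigma) : oc2_state :=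
  let '(d, T1, T2, G) := x in
  let f q := dfa_trans q c in
  (f d, f @: (dfa_s A |: T1), f @: T1, f @: G :|: (if oc2_final x then f @: T2 else set0)).

Definition oc2_start : oc2_state := (dfa_s A, set0, set0, set0).

Definition oc2_dfa : dfa Sigma := DFA oc2_start [set x | oc2_final x] oc2_trans.

Variable L : lang Sigma.

Definition overlap_runs_spec p (G : {set dfa_state A}) :=
  forall q, q \in G <-> exists k a,
    [/\ k < size p, oc2_lin L (take k p), a + 2 <= k & q = suffix_run p a].

Lemma overlap_runs_rcons p c (b : bool) T G :
  (b <-> oc2_lin L p) -> suffix_runs_spec 2 p T -> overlap_runs_spec p G ->
  overlap_runs_spec (rcons p c) ([set dfa_trans q c | q in G] :|:
                                 (if b then [set dfa_trans q c | q in T] else set0)).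
Proof.
move=> Hb HT HG q; rewrite size_rcons; split.
  case/setUP.
    case/imsetP => _ /HG [k [a [Hk Sk Ha ->]]] ->.
    have Hap : a <= size p by rewrite (leq_trans (leq_addr 2 a)) // (leq_trans Ha) // ltnW.
    exists k, a; split => //; first exact: ltnW.
      by rewrite -cats1 takel_cat // ltnW.
    by rewrite suffix_run_rcons.
  case: b Hb => [[/(_ isT) Sp _] | _]; last by rewrite inE.
  case/imsetP => _ /HT [a Ha ->] ->.
  exists (size p), a; rewrite -cats1 take_size_cat // cats1; split => //.
  by rewrite suffix_run_rcons // (leq_trans (leq_addr 2 a)).
case=> k [a [Hk Sk Ha ->]].
have Hap : a <= size p by rewrite (leq_trans (leq_addr 2 a)) // (leq_trans Ha) // -ltnS.
rewrite suffix_run_rcons //; apply/setUP.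
move: Hk; rewrite ltnS leq_eqVlt => /orP [/eqP Ek | Hk].
  rewrite Ek -cats1 take_size_cat // in Sk.
  have -> : b by apply/Hb.
  by right; apply/imsetP; exists (suffix_run p a) => //; apply/HT; exists a; rewrite // -Ek.
rewrite -cats1 takel_cat ?(ltnW Hk) // in Sk.
by left; apply/imsetP; exists (suffix_run p a) => //; apply/HG; exists k, a.
Qed.

Definition oc2_inv p (x : oc2_state) :=
  let '(d, T1, T2, G) := x in
  [/\ d = run (dfa_s A) p, suffix_runs_spec 1 p T1, suffix_runs_spec 2 p T2
    & overlap_runs_spec p G].

Hypothesis accept_L : forall w, L w <-> dfa_accept A w.

Lemma oc2_final_inv p x : oc2_inv p x -> oc2_final x <-> oc2_lin L p.
Proof.
case: x => [[[d T1] T2] G] [-> _ _ HG] /=.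
apply: iff_trans (iff_sym (oc2_linP L p)); split.
  case/orP => [Lp | /existsP [_ /andP [/HG [k [a [Hk Sk Ha ->]]] La]]].
    by left; apply/accept_L.
  by right; exists k, a; split => //; apply/accept_L.
case=> [/accept_L Lp | [k [a [Hk Sk Ha /accept_L La]]]]; apply/orP; [by left | right].
by apply/existsP; exists (suffix_run p a); apply/andP; split => //; apply/HG; exists k, a.
Qed.

Lemma oc2_inv_trans p c x : oc2_inv p x -> oc2_inv (rcons p c) (oc2_trans x c).
Proof.
move=> Hx; have Hfin := oc2_final_inv Hx.
case: x Hx Hfin => [[[d T1] T2] G] [-> H1 H2 HG] Hfin; split.
- by rewrite /run foldl_rcons.
- exact/suffix_runs_rcons/suffix_runs_setU1.
- exact: suffix_runs_rcons.
- exact: overlap_runs_rcons.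
Qed.

Lemma oc2_inv_run p : oc2_inv p (foldl oc2_trans oc2_start p).
Proof.
elim/last_ind: p => [|p c IH]; last by rewrite foldl_rcons; apply: oc2_inv_trans.
split=> // q; rewrite inE; split => //.
- by case=> a; rewrite addn1.
- by case=> a; rewrite addn2.
- by case=> k [a []].
Qed.

End OverlapAutomaton.

Theorem lemma4p10 (Sigma : finType) (L : lang Sigma) :
  regular L -> regular (OC2_star L).
Proof.
case=> A accept_L; exists (oc2_dfa A) => w.
apply: iff_trans (OC2_starE L w) _; rewrite /dfa_accept inE.
exact: iff_sym (oc2_final_inv accept_L (oc2_inv_run accept_L w)).
Qed.
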